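(* For any implicative frame $(X,\perp,Y,T)$, the algebra $(\mathcal{G}(X),\subseteq,\cap,\vee,\bot,X,\Rightarrow)$ of stable sets, where $\bot$ is the least stable set, $\vee$ the join in $\mathcal G(X)$ and $A\Rightarrow C={}'(A\blacktriangleright C')$, is an integral implicative lattice.
   Context: A sorted frame (polarity) is a triple $(X,\perp,Y)$ with $X,Y$ nonempty sets and ${\perp}\subseteq X\times Y$. For $U\subseteq X$ let $U'=\{y\in Y:\forall x\in U\ x\perp y\}$, and for $V\subseteq Y$ let ${}'V=\{x\in X:\forall y\in V\ x\perp y\}$. $A\subseteq X$ is stable if $A={}'(A')$; $B\subseteq Y$ is co-stable if $B=({}'B)'$. $\mathcal{G}(X)$, $\mathcal{G}(Y)$ are the complete lattices of stable, resp. co-stable, sets under inclusion (meets are intersections; joins are closures of unions, the closure of $W\subseteq X$ being ${}'(W')$ and of $W\subseteq Y$ being $W''=({}'W)'$). Preorders: for $x,z\in X$, $x\le z$ iff $\{x\}'\subseteq\{z\}'$; for $y,v\in Y$, $y\le v$ iff ${}'\{y\}\subseteq{}'\{v\}$; separated means both are partial orders. $\Gamma u$ is the set of elements above $u$. For $T\subseteq Y\times X\times Y$, its Galois dual $T'\subseteq X\times X\times Y$ is $uT'xv$ iff $\forall y\,(yTxv\Rightarrow u\perp y)$. An implicative frame is $(X,\perp,Y,T)$ with: (F0) $x\perp y$ iff $uT'xy$ for all $u\in X$; (F1) separated; (F2) each set $\{y: yTxv\}$ equals $\Gamma w$ for some $w\in Y$; (F3) if $yTxv$, $x_1\le x$,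 $v_1\le v$ then $yTx_1v_1$; (F4) for all $u,x\in X,v\in Y$, $\{x_1:uT'x_1v\}$ is stable and $\{v_1:uT'xv_1\}$ is co-stable. For $A\in\mathcal{G}(X)$, $B\in\mathcal{G}(Y)$: $A\blacktriangleright B=(\{y:\exists x\in A\,\exists v\in B\ yTxv\})''$. An integral implicative lattice is a bounded lattice with binary $\to$ satisfying (A1) $(a\vee b)\to c=(a\to c)\wedge(b\to c)$, (A2) $a\to(b\wedge c)=(a\to b)\wedge(a\to c)$, (A3) $a\le b$ iff $1\le a\to b$. *)

(* sets are predicates T -> Prop; set equality is Leibniz
   equality of predicates (provable via functional/propositional extensionality). *)
Set Implicit Arguments.

Section Polarity.
Variables (X Y : Type) (perp : X -> Y -> Prop).

Definition primeX (U : X -> Prop) : Y -> Prop := fun y => forall x, U x -> perp x y.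
Definition primeY (V : Y -> Prop) : X -> Prop := fun x => forall y, V y -> perp x y.

Definition subsetX (A B : X -> Prop) : Prop := forall x, A x -> B x.
Definition subsetY (A B : Y -> Prop) : Prop := forall y, A y -> B y.

Definition stableX (A : X -> Prop) : Prop := A = primeY (primeX A).
Definition costableY (B : Y -> Prop) : Prop := B = primeX (primeY B).

Definition leX (x z : X) : Prop := subsetY (primeX (fun u => u = x)) (primeX (fun u => u = z)).
Definition leY (y v : Y) : Prop := subsetX (primeY (fun w => w = y)) (primeY (fun w => w = v)).

Definition separated : Prop :=
  (forall x z, leX x z -> leX z x -> x = z) /\ (forall y v, leY y v -> leY v y -> y = v).

Definition GammaY (w : Y) : Y -> Prop := fun v => leY w v.

Variable T : Y -> X -> Y -> Prop.  (* T y x v  reads  yTxv *)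

Definition Tdual (u x : X) (v : Y) : Prop := forall y, T y x v -> perp u y.

Definition implicative_frame : Prop :=
  inhabited X /\ inhabited Y /\
  (* F0 *) (forall x y, perp x y <-> (forall u, Tdual u x y)) /\
  separated /\
  (forall x v, exists w, (fun y => T y x v) = GammaY w) /\
  (forall y x v x1 v1, T y x v -> leX x1 x -> leY v1 v -> T y x1 v1) /\
  (* F4 *) (forall u x v, stableX (fun x1 => Tdual u x1 v) /\ costableY (fun v1 => Tdual u x v1)).

Definition tri (A : X -> Prop) (B : Y -> Prop) : Y -> Prop :=
  primeX (primeY (fun y => exists x v, A x /\ B v /\ T y x v)).

Definition impl (A C : X -> Prop) : X -> Prop := primeY (tri A (primeX C)).

Definition meetX (A B : X -> Prop) : X -> Prop := fun x => A x /\ B x.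
Definition joinX (A B : X -> Prop) : X -> Prop := primeY (primeX (fun x => A x \/ B x)).
Definition topX : X -> Prop := fun _ => True.
Definition botX : X -> Prop := primeY (primeX (fun _ => False)).

End Polarity.

(* Stable sets are the closed sets of the Galois connection of the polarity,
   so they form a complete lattice with intersection as meet and the closure
   of the union as join.  Unfolding the definitions, u lies in A => C iff
   u T' x v for all x in A and v in C'.  Since every section of T' is stable in
   x (F4), that condition for the join A v B reduces to x in A or B (A1); since
   it is co-stable in v and (B /\ C)' is the closure of B' u C', the condition
   for B /\ C reduces to v in B' or C' (A2); and by F0, X <= A => B says that
   A is orthogonal to B', i.e. A <= B'' = B (A3). *)
From Stdlib Require Import FunctionalExtensionality PropExtensionality.

Lemma pred_ext (A : Type) (P Q : A -> Prop) : (forall a, P a <-> Q a) -> P = Q.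
Proof.
  intros PQ; extensionality a; apply propositional_extensionality; apply PQ.
Qed.

Section Polarity.
Variables (X Y : Type) (perp : X -> Y -> Prop).

Lemma primeY_stable (V : Y -> Prop) : stableX perp (primeY perp V).
Proof. apply pred_ext; unfold primeY, primeX; firstorder. Qed.

Lemma subsetX_closure (U : X -> Prop) : subsetX U (primeY perp (primeX perp U)).
Proof. unfold subsetX, primeY, primeX; firstorder. Qed.

Lemma closureX_least {U A : X -> Prop} :
  stableX perp A -> subsetX U A -> subsetX (primeY perp (primeX perp U)) A.
Proof. intros -> UA; unfold subsetX, primeY, primeX in *; firstorder. Qed.

Lemma closureY_least {V B : Y -> Prop} :
  costableY perp B -> subsetY V B -> subsetY (primeX perp (primeY perp V)) B.
Proof. intros -> VB; unfold subsetY, primeY, primeX in *; firstorder. Qed.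

Lemma primeY_or (V W : Y -> Prop) :
  primeY perp (fun y => V y \/ W y) = meetX (primeY perp V) (primeY perp W).
Proof. apply pred_ext; unfold meetX, primeY; firstorder. Qed.

Lemma topX_stable : stableX perp (@topX X).
Proof. apply pred_ext; unfold topX, primeY, primeX; firstorder. Qed.

Lemma botX_stable : stableX perp (botX perp).
Proof. apply primeY_stable. Qed.

Lemma botX_least (A : X -> Prop) : stableX perp A -> subsetX (botX perp) A.
Proof. intros HA; apply closureX_least; [exact HA | intros x []]. Qed.

Lemma meetX_stable (A B : X -> Prop) :
  stableX perp A -> stableX perp B -> stableX perp (meetX A B).
Proof.
  intros HA HB; apply pred_ext; intros x; split; [apply subsetX_closure |].
  intros Hx; split.
  - refine (closureX_least HA _ x Hx); intros z []; assumption.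
  - refine (closureX_least HB _ x Hx); intros z []; assumption.
Qed.

Lemma subsetX_joinXl (A B : X -> Prop) : subsetX A (joinX perp A B).
Proof. intros x Hx; apply subsetX_closure; left; exact Hx. Qed.

Lemma subsetX_joinXr (A B : X -> Prop) : subsetX B (joinX perp A B).
Proof. intros x Hx; apply subsetX_closure; right; exact Hx. Qed.

Lemma joinX_least (A B C : X -> Prop) :
  stableX perp C -> subsetX A C -> subsetX B C -> subsetX (joinX perp A B) C.
Proof. intros HC AC BC; apply closureX_least; [exact HC | intros x []; auto]. Qed.

Lemma primeX_meetX {B C : X -> Prop} : stableX perp B -> stableX perp C ->
  primeX perp (meetX B C)
  = primeX perp (primeY perp (fun y => primeX perp B y \/ primeX perp C y)).
Proof. intros HB HC; rewrite primeY_or, <- HB, <- HC; reflexivity. Qed.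

Variable T : Y -> X -> Y -> Prop.

Lemma implE (A C : X -> Prop) (u : X) : impl perp T A C u <->
  (forall x v, A x -> primeX perp C v -> Tdual perp T u x v).
Proof. unfold impl, tri, primeY, primeX, Tdual; firstorder eauto 10. Qed.

Lemma impl_stable (A C : X -> Prop) : stableX perp (impl perp T A C).
Proof. apply primeY_stable. Qed.

Hypothesis Tdual_stable :
  forall u (x : X) v, stableX perp (fun x1 => Tdual perp T u x1 v).

Lemma impl_joinXl (A B C : X -> Prop) :
  impl perp T (joinX perp A B) C = meetX (impl perp T A C) (impl perp T B C).
Proof.
  apply pred_ext; intros u; unfold meetX; rewrite !implE; split.
  - intros H; split; intros x v Hx Hv; apply H; auto.
    + apply subsetX_joinXl; exact Hx.
    + apply subsetX_joinXr; exact Hx.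
  - intros [HA HB] x v Hx Hv.
    refine (closureX_least (Tdual_stable u x v) _ x Hx).
    intros z []; auto.
Qed.

Hypothesis Tdual_costable :
  forall u x (v : Y), costableY perp (fun v1 => Tdual perp T u x v1).

Lemma impl_meetXr (A B C : X -> Prop) : stableX perp B -> stableX perp C ->
  impl perp T A (meetX B C) = meetX (impl perp T A B) (impl perp T A C).
Proof.
  intros HB HC; apply pred_ext; intros u; unfold meetX; rewrite !implE; split.
  - intros H; split; intros x v Hx Hv; apply H; auto;
      intros z [Bz Cz]; apply Hv; assumption.
  - intros [HAB HAC] x v Hx Hv.
    change (primeX perp (meetX B C) v) in Hv; rewrite (primeX_meetX HB HC) in Hv.
    refine (closureY_least (Tdual_costable u x v) _ v Hv).
    intros z []; auto.
Qed.

Hypothesis perp_Tdual : forall x y, perp x y <-> forall u, Tdual perp T u x y.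

Lemma subsetX_iff_topX_impl (A B : X -> Prop) : stableX perp B ->
  subsetX A B <-> subsetX (@topX X) (impl perp T A B).
Proof.
  intros HB; split.
  - intros AB u _; apply implE; intros x v Hx Hv.
    apply perp_Tdual; apply Hv, AB, Hx.
  - intros H x Hx; rewrite HB; intros v Hv.
    apply perp_Tdual; intros u; exact (proj1 (implE A B u) (H u I) x v Hx Hv).
Qed.

End Polarity.

Theorem corollary3p7 (X Y : Type) (perp : X -> Y -> Prop) (T : Y -> X -> Y -> Prop) :
  implicative_frame perp T ->
  (* bounded lattice structure of G(X): top, bottom, meets, joins *)
  stableX perp (@topX X) /\
  stableX perp (botX perp) /\
  (forall A, stableX perp A -> subsetX (botX perp) A /\ subsetX A (@topX X)) /\
  (forall A B, stableX perp A -> stableX perp B ->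
     stableX perp (meetX A B) /\
     subsetX (meetX A B) A /\ subsetX (meetX A B) B /\
     (forall C, stableX perp C -> subsetX C A -> subsetX C B -> subsetX C (meetX A B)) /\
     stableX perp (joinX perp A B) /\
     subsetX A (joinX perp A B) /\ subsetX B (joinX perp A B) /\
     (forall C, stableX perp C -> subsetX A C -> subsetX B C -> subsetX (joinX perp A B) C)) /\
  (* => is an operation on G(X) *)
  (forall A C, stableX perp A -> stableX perp C -> stableX perp (impl perp T A C)) /\
  (* A1 *)
  (forall A B C, stableX perp A -> stableX perp B -> stableX perp C ->
     impl perp T (joinX perp A B) C = meetX (impl perp T A C) (impl perp T B C)) /\
  (* A2 *)
  (forall A B C, stableX perp A -> stableX perp B -> stableX perp C ->
     impl perp T A (meetX B C) = meetX (impl perp T A B) (impl perp T A C)) /\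
  (* A3 *)
  (forall A B, stableX perp A -> stableX perp B ->
     (subsetX A B <-> subsetX (@topX X) (impl perp T A B))).
Proof.
  intros (_ & _ & perp_Tdual & _ & _ & _ & Tdual_closed).
  pose proof (fun u x v => proj1 (Tdual_closed u x v)) as Tdual_stable.
  pose proof (fun u x v => proj2 (Tdual_closed u x v)) as Tdual_costable.
  split; [apply topX_stable |].
  split; [apply botX_stable |].
  split; [intros A HA; split; [apply botX_least, HA | intros x _; exact I] |].
  split.
  { intros A B HA HB.
    split; [| split; [| split; [| split; [| split; [| split; [| split]]]]]].
    - apply meetX_stable; assumption.
    - intros x []; assumption.
    - intros x []; assumption.
    - intros C _ CA CB x Hx; split; auto.
    - apply primeY_stable.
    - apply subsetX_joinXl.
    - apply subsetX_joinXr.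
    - intros C HC; apply joinX_least, HC. }
  split; [intros A C _ _; apply impl_stable |].
  split; [intros A B C _ _ _; apply impl_joinXl, Tdual_stable |].
  split; [intros A B C _ HB HC; apply impl_meetXr; assumption |].
  intros A B _ HB; apply subsetX_iff_topX_impl; assumption.
Qed.
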